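(* Let $m\in\mathbb{N}^+$. There exist $\delta=\delta(m)>0$ and a constant $C>0$ independent of $m$ such that $$|y|^2\,|u^{(m)}_p(y)|^{p-1}\leq C\qquad\text{for all }y\in B\text{ and all }p\in(p_S-\delta,p_S).$$
   Context: Standing setting: $N\geq3$, $B$ unit ball of $\mathbb{R}^N$ centered at $0$, $p_S=\frac{N+2}{N-2}$. $u^{(m)}_p$ is the unique radial solution of $-\Delta u=|u|^{p-1}u$ in $B$, $u=0$ on $\partial B$, with exactly $m$ nodal regions and $u^{(m)}_p(0)>0$. *)

From Stdlib Require Import Reals Lra.
Open Scope R_scope.

(* a^e for a >= 0 and real e, with the convention 0^e = 0 (used with e = p-1 > 0). *)
Definition rpow (a e : R) : R := if Rle_dec a 0 then 0 else Rpower a e.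

Definition pS (N : nat) : R := (INR N + 2) / (INR N - 2).

(* v is the radial profile (u(x) = v(|x|)) of a classical solution of
   -Δu = |u|^{p-1} u in the unit ball B of R^N, u = 0 on ∂B, u ∈ C^2(B) ∩ C(closure B).
   v is taken even and twice differentiable on (-1,1) (regularity of x ↦ v(|x|) at 0),
   Δu = v'' + (N-1)/r v' for 0 < r < 1, v left-continuous at 1 with v(1) = 0. *)
Definition radial_solution (N : nat) (p : R) (v : R -> R) : Prop :=
  exists v' v'' : R -> R,
    (forall r, -1 < r < 1 ->
        derivable_pt_lim v r (v' r) /\ derivable_pt_lim v' r (v'' r)) /\
    (forall r, v (- r) = v r) /\
    (forall r, 0 < r < 1 ->
        v'' r + (INR N - 1) / r * v' r + rpow (Rabs (v r)) (p - 1) * v r = 0) /\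
    v 1 = 0 /\
    (forall eps, eps > 0 -> exists d, d > 0 /\
        forall r, 1 - d < r <= 1 -> Rabs (v r - v 1) < eps).

(* The radial function x ↦ v(|x|) has exactly m nodal regions (connected components of
   {x ∈ B : u(x) ≠ 0}): there are radii 0 = r_0 < r_1 < ... < r_m = 1 such that the zero
   set of v on [0,1) is exactly {r_1, ..., r_{m-1}}; the nodal regions are then the ball
   {|x| < r_1} and the annuli {r_{i-1} < |x| < r_i}. *)
Definition has_nodal_regions (m : nat) (v : R -> R) : Prop :=
  exists rad : nat -> R,
    rad 0%nat = 0 /\ rad m = 1 /\
    (forall i, (i < m)%nat -> rad i < rad (S i)) /\
    (forall r, 0 <= r < 1 ->
       (v r = 0 <-> exists i, (1 <= i)%nat /\ (i < m)%nat /\ r = rad i)).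

Definition nodal_radial_solution (N : nat) (p : R) (m : nat) (v : R -> R) : Prop :=
  radial_solution N p v /\ has_nodal_regions m v /\ v 0 > 0.

From Stdlib Require Import Reals Lra Lia Classical.
From Coquelicot Require Import Coquelicot.
Open Scope R_scope.

(* With beta = 2/(p-1), the Emden-Fowler change A(r) = r^beta v(r), t = ln r turns the
   radial equation into A_tt = alpha A_t + (b - K) A, where K = r^2 |v|^(p-1) is the quantity
   to bound and alpha = 2 beta + 2 - N lies in [0, eps) for p slightly below p_S.  The energy
   E = B^2/2 - b A^2/2 + A^2 K/(p+1), B = A_t, is nondecreasing (E_t = alpha B^2) and tends to
   0 at r = 0, so E >= 0; since A^2 = K^beta, a large K forces K <= 2(p+1) E, and it is enough
   to bound E.  For G = sqrt (2 (E + c)) one has G_t <= alpha |A_t|; on a nodal region A is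
   unimodal, because E >= 0 makes B cross 0 only downwards, so G increases by at most
   2 alpha sup|A| on each of the m regions.  As sup|A|^2 <= const + 2(p+1) E, choosing
   eps ~ 1/m lets the left side absorb this growth and bounds E by a constant depending on N. *)

(** * Real analysis on intervals *)

Lemma continuity_pt_ball (f : R -> R) x eps : continuity_pt f x -> 0 < eps ->
  exists d, 0 < d /\ forall y, Rabs (y - x) < d -> Rabs (f y - f x) < eps.
Proof.
  intros Hc He. destruct (Hc eps He) as [d [Hd H]].
  exists d; split; [exact Hd|]. intros y Hy.
  destruct (Req_dec y x) as [Hyx|Hyx]; [subst|].
  - rewrite Rminus_diag, Rabs_R0; lra.
  - apply H. repeat split; auto.
Qed.

Lemma continuity_pt_le_of_near (f : R -> R) x K : continuity_pt f x ->
  (forall d, 0 < d -> exists s, Rabs (s - x) < d /\ f s <= K) -> f x <= K.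
Proof.
  intros Hc Hnear. apply Rnot_lt_le. intro Hlt.
  destruct (continuity_pt_ball f x (f x - K) Hc) as [d [Hd Hball]]; [lra|].
  destruct (Hnear d Hd) as [s [Hs HfK]].
  specialize (Hball s Hs). apply Rabs_def2 in Hball. lra.
Qed.

Lemma continuity_pt_le_left (f : R -> R) a x K : a < x -> continuity_pt f x ->
  (forall s, a < s < x -> f s <= K) -> f x <= K.
Proof.
  intros Hax Hc H. apply (continuity_pt_le_of_near f x K Hc). intros d Hd.
  set (s := Rmax (x - d / 2) ((a + x) / 2)).
  assert (x - d / 2 <= s /\ (a + x) / 2 <= s) by (split; [apply Rmax_l | apply Rmax_r]).
  assert (s < x) by (apply Rmax_lub_lt; lra).
  exists s. split; [rewrite Rabs_left; lra | apply H; lra].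
Qed.

Lemma continuity_pt_ge_right (f : R -> R) x b K : x < b -> continuity_pt f x ->
  (forall s, x < s < b -> K <= f s) -> K <= f x.
Proof.
  intros Hxb Hc H.
  cut (- f x <= - K); [lra|].
  apply (continuity_pt_le_of_near (fun t => - f t)); [now apply continuity_pt_opp|].
  intros d Hd. set (s := Rmin (x + d / 2) ((x + b) / 2)).
  assert (s <= x + d / 2 /\ s <= (x + b) / 2) by (split; [apply Rmin_l | apply Rmin_r]).
  assert (x < s) by (apply Rmin_glb_lt; lra).
  exists s. split; [rewrite Rabs_right; lra | specialize (H s ltac:(lra)); lra].
Qed.

Lemma real_induction (P : R -> Prop) x y : x <= y -> P x ->
  (forall t, x <= t < y -> (forall s, x <= s <= t -> P s) ->
     exists h, 0 < h /\ forall s, t < s < t + h -> P s) ->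
  (forall t, x < t <= y -> (forall s, x <= s < t -> P s) -> P t) ->
  forall t, x <= t <= y -> P t.
Proof.
  intros Hxy Px Hright Hleft.
  set (S := fun s => x <= s <= y /\ forall u, x <= u <= s -> P u).
  assert (HSx : S x) by (split; [lra | intros u Hu; replace u with x by lra; exact Px]).
  destruct (completeness S) as [q [Hub Hlub]];
    [exists y; intros s [Hs _]; lra | exists x; exact HSx|].
  assert (Hxq : x <= q) by (apply Hub, HSx).
  assert (Hqy : q <= y) by (apply Hlub; intros s [Hs _]; lra).
  assert (Hbelow : forall u, x <= u < q -> P u).
  { intros u Hu. apply NNPP. intro HnP.
    assert (Hu_ub : is_upper_bound S u).
    { intros s [Hs HP]. apply Rnot_lt_le. intro. apply HnP, HP. lra. }
    specialize (Hlub u Hu_ub). lra. }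
  assert (Hupto : forall u, x <= u <= q -> P u).
  { intros u Hu. destruct (Rle_lt_or_eq_dec u q (proj2 Hu)) as [Hlt|Heq]; [apply Hbelow; lra|].
    rewrite Heq. destruct (Rle_lt_or_eq_dec x q Hxq) as [Hlt|Hxq'];
      [apply Hleft; auto; lra | rewrite <- Hxq'; exact Px]. }
  destruct (Rle_lt_or_eq_dec q y Hqy) as [Hlt|Hqy']; [|rewrite <- Hqy'; exact Hupto].
  exfalso. destruct (Hright q (conj Hxq Hlt) Hupto) as [h [Hh Hnext]].
  set (s := Rmin (q + h / 2) y).
  assert (s <= q + h / 2 /\ s <= y) by (split; [apply Rmin_l | apply Rmin_r]).
  assert (q < s) by (apply Rmin_glb_lt; lra).
  assert (HSs : S s).
  { split; [lra|]. intros u Hu.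
    destruct (Rle_or_lt u q); [apply Hupto; lra | apply Hnext; lra]. }
  specialize (Hub s HSs). lra.
Qed.

Lemma derivable_pt_lim_neg_right (f : R -> R) x l : derivable_pt_lim f x l -> l < 0 ->
  exists h, 0 < h /\ forall s, x < s < x + h -> f s < f x.
Proof.
  intros Hd Hl. destruct (Hd (- l / 2)) as [del Hdel]; [lra|].
  exists del. split; [apply cond_pos|]. intros s Hs.
  specialize (Hdel (s - x) ltac:(lra) ltac:(rewrite Rabs_right; lra)).
  replace (x + (s - x)) with s in Hdel by ring.
  apply Rabs_def2 in Hdel.
  assert (Hq : (f s - f x) / (s - x) < 0) by lra.
  assert (f s - f x = (f s - f x) / (s - x) * (s - x)) by (field; lra).
  nra.
Qed.

Lemma nonpos_persists (f f' : R -> R) u y :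
  (forall t, u <= t <= y -> derivable_pt_lim f t (f' t)) ->
  (forall t, u <= t <= y -> f t = 0 -> f' t < 0) ->
  f u <= 0 -> forall t, u <= t <= y -> f t <= 0.
Proof.
  intros Hd Hzero Hu t Ht.
  apply (real_induction (fun t => f t <= 0) u y); auto; [lra| |].
  - intros s Hs Hbefore.
    destruct (Rle_lt_or_eq_dec _ _ (Hbefore s ltac:(lra))) as [Hneg|Hnul].
    + destruct (continuity_pt_ball f s (- f s)) as [d [Hd0 Hball]]; [|lra|].
      { apply derivable_continuous_pt. exists (f' s). apply Hd. lra. }
      exists d. split; [exact Hd0|]. intros w Hw.
      specialize (Hball w ltac:(rewrite Rabs_right; lra)). apply Rabs_def2 in Hball. lra.
    + destruct (derivable_pt_lim_neg_right f s (f' s)) as [h [Hh Hdec]];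
        [apply Hd; lra | apply Hzero; lra|].
      exists h. split; [exact Hh|]. intros w Hw. specialize (Hdec w Hw). lra.
  - intros s Hs Hbefore. apply (continuity_pt_le_left f u); [lra| |].
    + apply derivable_continuous_pt. exists (f' s). apply Hd. lra.
    + intros w Hw. apply Hbefore. lra.
Qed.

Lemma sign_change_once (f : R -> R) x y : x <= y ->
  (forall u, x <= u <= y -> f u < 0 -> forall t, u <= t <= y -> f t <= 0) ->
  exists q, x <= q <= y /\ (forall t, x < t < q -> 0 <= f t) /\ (forall t, q < t < y -> f t <= 0).
Proof.
  intros Hxy Hpersist.
  set (S := fun s => s <= y /\ forall u, x <= u < s -> 0 <= f u).
  assert (HSx : S x) by (split; [lra | intros u Hu; lra]).
  destruct (completeness S) as [q [Hub Hlub]];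
    [exists y; intros s [Hs _]; lra | exists x; exact HSx|].
  assert (Hxq : x <= q) by (apply Hub, HSx).
  assert (Hqy : q <= y) by (apply Hlub; intros s [Hs _]; lra).
  exists q. split; [lra|]. split.
  - intros t Ht. apply NNPP. intro Hneg.
    assert (Ht_ub : is_upper_bound S t).
    { intros s [_ Hs]. apply Rnot_lt_le. intro. apply Hneg, Hs. lra. }
    specialize (Hlub t Ht_ub). lra.
  - intros t Ht. assert (HnS : ~ S t) by (intro HS; specialize (Hub t HS); lra).
    apply not_and_or in HnS as [|HnS]; [lra|].
    apply not_all_ex_not in HnS as [u Hu]. apply imply_to_and in Hu as [Hu Hfu].
    apply (Hpersist u); lra.
Qed.

Lemma nonincreasing_of_derive_nonpos (f f' : R -> R) a b : a <= b ->
  (forall c, a <= c <= b -> derivable_pt_lim f c (f' c)) ->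
  (forall c, a < c < b -> f' c <= 0) -> f b <= f a.
Proof.
  intros Hab Hd Hneg. destruct (Rle_lt_or_eq_dec _ _ Hab) as [Hlt|Heq]; [|subst; lra].
  destruct (MVT_cor2 f f' a b Hlt Hd) as [c [Heq Hc]].
  specialize (Hneg c Hc). nra.
Qed.

Lemma continuity_sign_preserved (f : R -> R) x y :
  (forall t, x <= t <= y -> continuity_pt f t) -> (forall t, x <= t <= y -> f t <> 0) ->
  0 < f x -> forall t, x <= t <= y -> 0 < f t.
Proof.
  intros Hc Hnz Hx t Ht. apply Rnot_le_lt. intro Hle.
  destruct (Rle_lt_or_eq_dec _ _ Hle) as [Hlt|Heq]; [|exact (Hnz t Ht Heq)].
  destruct (Ranalysis5.IVT_interv (fun s => - f s) x t) as [z [Hz Hfz]].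
  - intros s Hs. apply continuity_pt_opp, Hc. lra.
  - destruct (Rle_lt_or_eq_dec _ _ (proj1 Ht)) as [|Hxt]; [assumption | subst; lra].
  - lra.
  - lra.
  - apply (Hnz z); lra.
Qed.

Lemma Rpower_2 x : 0 < x -> Rpower x 2 = x ^ 2.
Proof. intro Hx. replace 2 with (INR 2) by (simpl; ring). apply Rpower_pow, Hx. Qed.

Lemma rpow_pos a e : 0 < a -> rpow a e = Rpower a e.
Proof. intro Ha. unfold rpow. destruct (Rle_dec a 0); [lra | reflexivity]. Qed.

Lemma rpow_0 e : rpow 0 e = 0.
Proof. unfold rpow. destruct (Rle_dec 0 0); [reflexivity | lra]. Qed.

Lemma rpow_ge0 a e : 0 <= rpow a e.
Proof. unfold rpow. destruct (Rle_dec a 0); [lra | left; apply exp_pos]. Qed.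

Lemma rpow_abs_plus2 x e : rpow (Rabs x) (e + 2) = x ^ 2 * rpow (Rabs x) e.
Proof.
  destruct (Req_dec x 0) as [Hx|Hx]; [subst; rewrite Rabs_R0, !rpow_0; ring|].
  assert (Ha : 0 < Rabs x) by (apply Rabs_pos_lt, Hx).
  rewrite !rpow_pos, Rpower_plus, Rpower_2, pow2_abs by exact Ha. ring.
Qed.

Lemma rpow_le_sqr a e : 0 <= a <= 1 -> 2 <= e -> rpow a e <= a ^ 2.
Proof.
  intros Ha He. destruct (Req_dec a 0) as [H0|H0]; [subst; rewrite rpow_0; lra|].
  rewrite rpow_pos, <- Rpower_2 by lra. unfold Rpower. destruct (Req_dec a 1) as [H1|H1]; [subst; rewrite ln_1, !Rmult_0_r; lra|].
  assert (ln a < 0) by (rewrite <- ln_1; apply ln_increasing; lra).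
  destruct (Rle_lt_or_eq_dec _ _ He) as [Hlt|Heq]; [left; apply exp_increasing; nra | subst; lra].
Qed.

Lemma rpow_le_Rpower a b e : 0 <= e -> 0 <= a <= b -> 0 < b -> rpow a e <= Rpower b e.
Proof.
  intros He Hab Hb. unfold rpow. destruct (Rle_dec a 0); [left; apply exp_pos|].
  apply Rle_Rpower_l; lra.
Qed.

Lemma ln_mult_self y : y <> 0 -> ln (y * y) = 2 * ln (Rabs y).
Proof.
  intro Hy. assert (Ha : 0 < Rabs y) by (apply Rabs_pos_lt, Hy).
  replace (y * y) with (Rabs y * Rabs y) by (rewrite <- Rabs_mult; apply Rabs_pos_eq; nra).
  rewrite ln_mult by exact Ha. ring.
Qed.

Lemma is_derive_abs_rpow p u : 1 < p ->
  is_derive (fun y => rpow (Rabs y) (p + 1)) u ((p + 1) * rpow (Rabs u) (p - 1) * u).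
Proof.
  intro Hp. destruct (Req_dec u 0) as [Hu|Hu].
  - subst. rewrite Rmult_0_r. apply is_derive_Reals. intros eps He.
    assert (Hd : 0 < Rmin 1 eps) by (apply Rmin_glb_lt; lra).
    exists (mkposreal _ Hd). intros h Hh Hlt. simpl in Hlt.
    assert (Hh1 : Rabs h < 1 /\ Rabs h < eps)
      by (split; eapply Rlt_le_trans; eauto; [apply Rmin_l | apply Rmin_r]).
    rewrite Rplus_0_l, Rabs_R0, rpow_0, !Rminus_0_r.
    assert (Hsq : rpow (Rabs h) (p + 1) <= Rabs h ^ 2)
      by (apply rpow_le_sqr; [split; [apply Rabs_pos | lra] | lra]).
    pose proof (rpow_ge0 (Rabs h) (p + 1)). pose proof (Rabs_pos_lt h Hh).
    rewrite Rabs_div, (Rabs_pos_eq (rpow _ _)) by auto.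
    apply (Rmult_lt_reg_r (Rabs h)); [lra|].
    unfold Rdiv. rewrite Rmult_assoc, Rinv_l, Rmult_1_r by lra. nra.
  - assert (Ha : 0 < Rabs u) by (apply Rabs_pos_lt, Hu).
    apply (is_derive_ext_loc (fun y => exp ((p + 1) / 2 * ln (y * y)))).
    + exists (mkposreal _ Ha). intros y Hy. change (Rabs (y - u) < Rabs u) in Hy.
      assert (Hy0 : y <> 0) by (intro; subst; rewrite Rminus_0_l, Rabs_Ropp in Hy; lra).
      rewrite rpow_pos by (apply Rabs_pos_lt, Hy0). unfold Rpower.
      rewrite ln_mult_self by exact Hy0. f_equal. field.
    + auto_derive; [nra|].
      rewrite ln_mult_self, rpow_pos by auto. unfold Rpower.
      replace ((p + 1) / 2 * (2 * ln (Rabs u))) with ((p - 1) * ln (Rabs u) + 2 * ln (Rabs u)) by field.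
      rewrite exp_plus. replace (2 * ln (Rabs u)) with (ln (Rabs u) + ln (Rabs u)) by ring.
      rewrite exp_plus, exp_ln by exact Ha.
      replace (Rabs u * Rabs u) with (u * u) by (rewrite <- Rabs_mult; symmetry; apply Rabs_pos_eq; nra).
      field. exact Hu.
Qed.

(** * Emden-Fowler variables and energy *)

Definition ef_beta (p : R) : R := 2 / (p - 1).
Definition ef_alpha (N : nat) (p : R) : R := 2 * ef_beta p + 2 - INR N.
Definition ef_b (N : nat) (p : R) : R := ef_beta p * (INR N - 2 - ef_beta p).

Definition ef_A (p : R) (v : R -> R) (r : R) : R := Rpower r (ef_beta p) * v r.
Definition ef_B (p : R) (v v' : R -> R) (r : R) : R :=
  Rpower r (ef_beta p) * (ef_beta p * v r + r * v' r).
Definition ef_K (p : R) (v : R -> R) (r : R) : R := r ^ 2 * rpow (Rabs (v r)) (p - 1).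
Definition ef_energy (N : nat) (p : R) (v v' : R -> R) (r : R) : R :=
  ef_B p v v' r ^ 2 / 2 - ef_b N p * ef_A p v r ^ 2 / 2 + ef_A p v r ^ 2 * ef_K p v r / (p + 1).

Definition ode_solution (N : nat) (p : R) (v v' v'' : R -> R) : Prop :=
  forall r, 0 < r < 1 -> is_derive v r (v' r) /\ is_derive v' r (v'' r) /\
    v'' r + (INR N - 1) / r * v' r + rpow (Rabs (v r)) (p - 1) * v r = 0.

Lemma ef_beta_pos p : 1 < p -> 0 < ef_beta p.
Proof. intro Hp. unfold ef_beta. apply Rdiv_lt_0_compat; lra. Qed.

Lemma ef_K_ge0 p v r : 0 <= ef_K p v r.
Proof. unfold ef_K. apply Rmult_le_pos; [apply pow2_ge_0 | apply rpow_ge0]. Qed.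

Lemma ef_K_pos p v r : 0 < r -> v r <> 0 -> 0 < ef_K p v r.
Proof.
  intros Hr Hv. unfold ef_K. rewrite rpow_pos by (apply Rabs_pos_lt, Hv).
  apply Rmult_lt_0_compat; [apply pow_lt, Hr | apply exp_pos].
Qed.

Lemma ef_A_sq_K p v r : 0 < r ->
  ef_A p v r ^ 2 * ef_K p v r = Rpower r (2 * ef_beta p + 2) * rpow (Rabs (v r)) (p + 1).
Proof.
  intro Hr. unfold ef_A, ef_K.
  replace (p + 1) with ((p - 1) + 2) by ring. rewrite rpow_abs_plus2.
  rewrite Rpower_plus, Rpower_2 by exact Hr.
  replace (2 * ef_beta p) with (ef_beta p + ef_beta p) by ring. rewrite Rpower_plus. ring.
Qed.

Lemma ef_A_sq p v r : 1 < p -> 0 < r -> v r <> 0 -> ef_A p v r ^ 2 = Rpower (ef_K p v r) (ef_beta p).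
Proof.
  intros Hp Hr Hv. assert (Ha : 0 < Rabs (v r)) by (apply Rabs_pos_lt, Hv).
  unfold ef_A, ef_K. rewrite rpow_pos by exact Ha.
  rewrite <- (Rpower_mult_distr (r ^ 2)) by (try apply pow_lt; auto; apply exp_pos).
  rewrite <- (Rpower_2 r), !Rpower_mult by exact Hr.
  replace ((p - 1) * ef_beta p) with 2 by (unfold ef_beta; field; lra).
  rewrite Rpower_2, pow2_abs by exact Ha.
  replace (2 * ef_beta p) with (ef_beta p + ef_beta p) by ring. rewrite Rpower_plus. ring.
Qed.

Ltac rewrite_derive H :=
  lazymatch type of H with
  | is_derive ?f ?x ?l =>
      match goal with
      | |- context [Derive ?g x] =>
          unify g f; replace (Derive g x) with l by (symmetry; apply is_derive_unique; exact H)
      end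
  end.

Lemma is_derive_ef_A p v v' r : 0 < r -> is_derive v r (v' r) ->
  is_derive (ef_A p v) r (ef_B p v v' r / r).
Proof.
  intros Hr Hd. unfold ef_A, ef_B, Rpower. auto_derive.
  - repeat split; [exact Hr | exists (v' r); exact Hd].
  - rewrite_derive Hd. field. lra.
Qed.

Lemma is_derive_ef_B N p v v' v'' r : 0 < r -> 1 < p ->
  is_derive v r (v' r) -> is_derive v' r (v'' r) ->
  v'' r + (INR N - 1) / r * v' r + rpow (Rabs (v r)) (p - 1) * v r = 0 ->
  is_derive (ef_B p v v') r
    ((ef_alpha N p * ef_B p v v' r + ef_b N p * ef_A p v r - ef_K p v r * ef_A p v r) / r).
Proof.
  intros Hr Hp Hd Hd' Hode. unfold ef_A, ef_B, ef_K, ef_alpha, ef_b, Rpower. auto_derive.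
  - repeat split; [exact Hr | exists (v' r); exact Hd | exists (v'' r); exact Hd'].
  - rewrite_derive Hd. rewrite_derive Hd'.
    replace (v'' r) with (- ((INR N - 1) / r * v' r) - rpow (Rabs (v r)) (p - 1) * v r) by lra.
    unfold ef_beta. field. lra.
Qed.

Lemma is_derive_abs_rpow_comp p (f : R -> R) x d : 1 < p -> is_derive f x d ->
  is_derive (fun t => rpow (Rabs (f t)) (p + 1)) x ((p + 1) * rpow (Rabs (f x)) (p - 1) * f x * d).
Proof.
  intros Hp Hd. apply is_derive_Reals.
  apply (derivable_pt_lim_comp f (fun y => rpow (Rabs y) (p + 1)));
    apply is_derive_Reals; [exact Hd | apply is_derive_abs_rpow, Hp].
Qed.

Lemma ef_energy_Rpower N p v v' r : 0 < r ->
  ef_energy N p v v' r = ef_B p v v' r ^ 2 / 2 - ef_b N p * ef_A p v r ^ 2 / 2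
    + Rpower r (2 * ef_beta p + 2) * rpow (Rabs (v r)) (p + 1) / (p + 1).
Proof. intro Hr. unfold ef_energy. rewrite ef_A_sq_K by exact Hr. reflexivity. Qed.

Lemma is_derive_ef_energy N p v v' v'' r : 0 < r -> 1 < p ->
  is_derive v r (v' r) -> is_derive v' r (v'' r) ->
  v'' r + (INR N - 1) / r * v' r + rpow (Rabs (v r)) (p - 1) * v r = 0 ->
  is_derive (ef_energy N p v v') r (ef_alpha N p * ef_B p v v' r ^ 2 / r).
Proof.
  intros Hr Hp Hd Hd' Hode.
  pose proof (is_derive_ef_A p v v' r Hr Hd) as HA.
  pose proof (is_derive_ef_B N p v v' v'' r Hr Hp Hd Hd' Hode) as HB.
  pose proof (is_derive_abs_rpow_comp p v r (v' r) Hp Hd) as HW.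
  set (W := fun t => rpow (Rabs (v t)) (p + 1)) in HW.
  assert (HWr : Rpower r (2 * ef_beta p + 2) * W r = ef_A p v r ^ 2 * ef_K p v r)
    by (symmetry; apply ef_A_sq_K, Hr).
  apply (is_derive_ext_loc (fun t => ef_B p v v' t ^ 2 / 2 - ef_b N p * ef_A p v t ^ 2 / 2
      + Rpower t (2 * ef_beta p + 2) * W t / (p + 1))).
  { exists (mkposreal _ Hr). intros t Ht. change (Rabs (t - r) < r) in Ht.
    apply Rabs_def2 in Ht. symmetry. apply ef_energy_Rpower. lra. }
  clearbody W. unfold Rpower in *. auto_derive.
  - repeat split; auto; eexists; eassumption.
  - rewrite_derive HA. rewrite_derive HB. rewrite_derive HW.
    assert (He : exp ((2 * ef_beta p + 2) * ln r) = exp (ef_beta p * ln r) ^ 2 * r ^ 2).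
    { replace ((2 * ef_beta p + 2) * ln r) with (ef_beta p * ln r + ef_beta p * ln r + (ln r + ln r)) by ring.
      rewrite !exp_plus, exp_ln by exact Hr. ring. }
    assert (Hpos : 0 < exp (ef_beta p * ln r)) by apply exp_pos.
    replace (W r) with (ef_A p v r ^ 2 * ef_K p v r / exp ((2 * ef_beta p + 2) * ln r))
      by (rewrite <- HWr; field; apply Rgt_not_eq, exp_pos).
    rewrite He. unfold ef_A, ef_B, ef_K, ef_alpha, ef_b, Rpower. unfold ef_beta in *.
    field. repeat split; lra.
Qed.

Lemma Rpower_lt_near_0 b eps : 0 < b -> 0 < eps ->
  exists d, 0 < d /\ forall s, 0 < s < d -> Rpower s b < eps.
Proof.
  intros Hb He. exists (Rpower eps (/ b)). split; [apply exp_pos|].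
  intros s Hs. replace eps with (Rpower (Rpower eps (/ b)) b).
  - apply Rlt_Rpower_l; lra.
  - rewrite Rpower_mult, Rinv_l, Rpower_1 by lra. reflexivity.
Qed.

Lemma continuity_pt_locally_bounded (f : R -> R) x : continuity_pt f x ->
  exists d, 0 < d /\ forall y, Rabs (y - x) < d -> Rabs (f y) <= Rabs (f x) + 1.
Proof.
  intro Hc. destruct (continuity_pt_ball f x 1 Hc Rlt_0_1) as [d [Hd Hball]].
  exists d. split; [exact Hd|]. intros y Hy.
  specialize (Hball y Hy). pose proof (Rabs_triang_inv (f y) (f x)). lra.
Qed.

Lemma ef_energy_abs_le N p v v' s M : 1 < p -> 0 < s < 1 -> 0 < M ->
  Rabs (v s) <= M -> Rabs (v' s) <= M ->
  Rabs (ef_energy N p v v' s) <= Rpower s (ef_beta p) ^ 2 *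
    (((ef_beta p + 1) * M) ^ 2 / 2 + Rabs (ef_b N p) * M ^ 2 / 2
     + M ^ 2 * Rpower M (p - 1) / (p + 1)).
Proof.
  intros Hp Hs HM Hv Hv'.
  pose proof (ef_beta_pos p Hp) as Hb.
  set (e := Rpower s (ef_beta p)).
  set (a := (ef_beta p * v s + s * v' s) ^ 2).
  set (w := v s ^ 2).
  set (K := ef_K p v s).
  assert (HE : ef_energy N p v v' s = e ^ 2 * (a / 2 - ef_b N p * w / 2 + w * K / (p + 1)))
    by (unfold ef_energy, ef_A, ef_B, a, w, K, e; field; lra).
  assert (Ha : 0 <= a <= ((ef_beta p + 1) * M) ^ 2).
  { split; [apply pow2_ge_0|]. apply pow_maj_Rabs.
    eapply Rle_trans; [apply Rabs_triang|]. rewrite !Rabs_mult, (Rabs_pos_eq (ef_beta p)), (Rabs_pos_eq s) by lra.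
    assert (ef_beta p * Rabs (v s) <= ef_beta p * M) by (apply Rmult_le_compat_l; lra).
    assert (s * Rabs (v' s) <= M) by (pose proof (Rabs_pos (v' s)); nra). lra. }
  assert (Hw : 0 <= w <= M ^ 2) by (split; [apply pow2_ge_0 | apply pow_maj_Rabs, Hv]).
  assert (HK : 0 <= K <= Rpower M (p - 1)).
  { split; [apply ef_K_ge0|]. unfold K, ef_K.
    assert (rpow (Rabs (v s)) (p - 1) <= Rpower M (p - 1))
      by (apply rpow_le_Rpower; [lra | split; [apply Rabs_pos | exact Hv] | exact HM]).
    pose proof (rpow_ge0 (Rabs (v s)) (p - 1)).
    assert (s ^ 2 <= 1) by (simpl; nra). nra. }
  assert (HbW : Rabs (ef_b N p * w) <= Rabs (ef_b N p) * M ^ 2).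
  { rewrite Rabs_mult, (Rabs_pos_eq w) by lra. apply Rmult_le_compat_l; [apply Rabs_pos | lra]. }
  assert (HwK : 0 <= w * K / (p + 1) <= M ^ 2 * Rpower M (p - 1) / (p + 1)).
  { split; [apply Rmult_le_pos; [nra | left; apply Rinv_0_lt_compat; lra]|].
    apply Rmult_le_compat_r; [left; apply Rinv_0_lt_compat; lra | apply Rmult_le_compat; lra]. }
  rewrite HE, Rabs_mult, (Rabs_pos_eq (e ^ 2)) by apply pow2_ge_0.
  apply Rmult_le_compat_l; [apply pow2_ge_0|].
  pose proof (Rle_abs (ef_b N p * w)). pose proof (Rle_abs (- (ef_b N p * w))).
  rewrite Rabs_Ropp in *. apply Rabs_le. lra.
Qed.

Section Solution.
Variables (N : nat) (p : R) (v v' v'' : R -> R).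
Hypothesis Hp : 1 < p.
Hypothesis Hsol : ode_solution N p v v' v''.

Lemma solution_is_derive_ef_energy r : 0 < r < 1 ->
  is_derive (ef_energy N p v v') r (ef_alpha N p * ef_B p v v' r ^ 2 / r).
Proof.
  intro Hr. destruct (Hsol r Hr) as [Hd [Hd' Hode]].
  apply (is_derive_ef_energy N p v v' v''); auto; lra.
Qed.

Lemma solution_continuity_pt r : 0 < r < 1 -> continuity_pt v r.
Proof.
  intro Hr. destruct (Hsol r Hr) as [Hd _].
  apply derivable_continuous_pt. exists (v' r). apply is_derive_Reals, Hd.
Qed.

Lemma ef_energy_nondecreasing x y : 0 <= ef_alpha N p -> 0 < x -> x <= y -> y < 1 ->
  ef_energy N p v v' x <= ef_energy N p v v' y.
Proof.
  intros Ha Hx Hxy Hy.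
  cut (- ef_energy N p v v' y <= - ef_energy N p v v' x); [lra|].
  apply (nonincreasing_of_derive_nonpos (fun t => - ef_energy N p v v' t) (fun t => - (ef_alpha N p * ef_B p v v' t ^ 2 / t)) x y Hxy).
  - intros t Ht. apply is_derive_Reals, (is_derive_opp (ef_energy N p v v')).
    apply solution_is_derive_ef_energy. lra.
  - intros t Ht. assert (0 <= ef_alpha N p * ef_B p v v' t ^ 2 / t); [|lra].
    apply Rmult_le_pos; [apply Rmult_le_pos; [exact Ha | apply pow2_ge_0]|].
    left; apply Rinv_0_lt_compat; lra.
Qed.

Hypothesis Hv0 : continuity_pt v 0.
Hypothesis Hv'0 : continuity_pt v' 0.

Lemma ef_energy_O_near_0 : exists d Q, 0 < d /\ 0 <= Q /\
  forall s, 0 < s < d -> Rabs (ef_energy N p v v' s) <= Rpower s (ef_beta p) ^ 2 * Q.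
Proof.
  destruct (continuity_pt_locally_bounded v 0 Hv0) as [d1 [Hd1 Hb1]].
  destruct (continuity_pt_locally_bounded v' 0 Hv'0) as [d2 [Hd2 Hb2]].
  pose proof (Rabs_pos (v 0)). pose proof (Rabs_pos (v' 0)).
  set (M := Rabs (v 0) + Rabs (v' 0) + 1).
  assert (HM : 0 < M) by (unfold M; lra).
  exists (Rmin (Rmin d1 d2) 1), (((ef_beta p + 1) * M) ^ 2 / 2 + Rabs (ef_b N p) * M ^ 2 / 2
                                   + M ^ 2 * Rpower M (p - 1) / (p + 1)).
  split; [repeat apply Rmin_glb_lt; lra|]. split.
  - pose proof (Rabs_pos (ef_b N p)). pose proof (pow2_ge_0 ((ef_beta p + 1) * M)). pose proof (pow2_ge_0 M).
    assert (0 <= M ^ 2 * Rpower M (p - 1) / (p + 1))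
      by (apply Rmult_le_pos; [apply Rmult_le_pos; [lra | left; apply exp_pos]
                              | left; apply Rinv_0_lt_compat; lra]).
    nra.
  - intros s [Hs0 Hs]. apply Rmin_Rgt in Hs as [Hs Hs1]. apply Rmin_Rgt in Hs as [Hsd1 Hsd2].
    apply ef_energy_abs_le; [exact Hp | lra | exact HM | |].
    + specialize (Hb1 s ltac:(rewrite Rminus_0_r, Rabs_right; lra)). unfold M. lra.
    + specialize (Hb2 s ltac:(rewrite Rminus_0_r, Rabs_right; lra)). unfold M. lra.
Qed.

Lemma ef_energy_near_0 eps : 0 < eps ->
  exists d, 0 < d /\ forall s, 0 < s < d -> Rabs (ef_energy N p v v' s) <= eps.
Proof.
  intro He. destruct ef_energy_O_near_0 as [d1 [Q [Hd1 [HQ HO]]]].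
  assert (Heq : 0 < Rmin 1 (eps / (Q + 1))) by (apply Rmin_glb_lt; [lra | apply Rdiv_lt_0_compat; lra]).
  destruct (Rpower_lt_near_0 (ef_beta p) _ (ef_beta_pos p Hp) Heq) as [d2 [Hd2 Hsmall]].
  exists (Rmin d1 d2). split; [apply Rmin_glb_lt; lra|].
  intros s [Hs0 Hs]. apply Rmin_Rgt in Hs as [Hsd1 Hsd2].
  eapply Rle_trans; [apply HO; lra|].
  specialize (Hsmall s ltac:(lra)). apply Rmin_Rgt in Hsmall as [He1 HeQ].
  set (e := Rpower s (ef_beta p)) in *.
  assert (0 < e) by apply exp_pos.
  assert (e ^ 2 <= e) by (simpl; nra).
  assert (e * Q <= eps / (Q + 1) * Q) by (apply Rmult_le_compat_r; lra).
  assert (eps / (Q + 1) * Q <= eps) by (apply (Rmult_le_reg_r (Q + 1)); [lra|]; field_simplify; nra).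
  nra.
Qed.

Lemma ef_energy_nonneg r : 0 <= ef_alpha N p -> 0 < r < 1 -> 0 <= ef_energy N p v v' r.
Proof.
  intros Ha Hr. apply Rnot_lt_le. intro Hneg.
  destruct (ef_energy_near_0 (- ef_energy N p v v' r / 2)) as [d [Hd Hnear]]; [lra|].
  set (s := Rmin (d / 2) (r / 2)).
  assert (Hs : 0 < s /\ s < d /\ s <= r)
    by (pose proof (Rmin_l (d / 2) (r / 2)); pose proof (Rmin_r (d / 2) (r / 2));
        unfold s; repeat split; try lra; apply Rmin_glb_lt; lra).
  pose proof (ef_energy_nondecreasing s r Ha ltac:(lra) ltac:(lra) ltac:(lra)).
  specialize (Hnear s ltac:(lra)). pose proof (Rle_abs (- ef_energy N p v v' s)).
  rewrite Rabs_Ropp in *. lra.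
Qed.

End Solution.

(** * Growth across nodal regions *)

Definition ef_G (c : R) (N : nat) (p : R) (v v' : R -> R) (r : R) : R :=
  sqrt (2 * (ef_energy N p v v' r + c)).

Lemma ef_b_lt_K N p v v' r : 1 < p -> 0 < r -> v r <> 0 ->
  ef_B p v v' r = 0 -> 0 <= ef_energy N p v v' r -> ef_b N p < ef_K p v r.
Proof.
  intros Hp Hr Hv HB HE.
  assert (HA : 0 < ef_A p v r ^ 2).
  { apply pow2_gt_0. unfold ef_A.
    apply Rmult_integral_contrapositive. split; [apply Rgt_not_eq, exp_pos | exact Hv]. }
  pose proof (ef_K_pos p v r Hr Hv) as HK.
  unfold ef_energy in HE. rewrite HB in HE.
  assert (Hfac : 0 <= ef_A p v r ^ 2 * (2 * ef_K p v r - (p + 1) * ef_b N p))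
    by (replace (ef_A p v r ^ 2 * (2 * ef_K p v r - (p + 1) * ef_b N p))
          with (2 * (p + 1) * (0 ^ 2 / 2 - ef_b N p * ef_A p v r ^ 2 / 2 + ef_A p v r ^ 2 * ef_K p v r / (p + 1)))
          by (field; lra); apply Rmult_le_pos; lra).
  assert (0 <= 2 * ef_K p v r - (p + 1) * ef_b N p)
    by (apply (Rmult_le_reg_l (ef_A p v r ^ 2)); lra).
  destruct (Rle_or_lt (ef_b N p) 0); nra.
Qed.

Section Growth.
Variables (N : nat) (p c : R) (v v' v'' : R -> R).
Hypothesis Hp : 1 < p.
Hypothesis Hsol : ode_solution N p v v' v''.
Hypothesis Halpha : 0 <= ef_alpha N p.
Hypothesis Hkinetic : forall r, 0 < r < 1 -> ef_B p v v' r ^ 2 < 2 * (ef_energy N p v v' r + c).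
Hypothesis Hnonneg : forall r, 0 < r < 1 -> 0 <= ef_energy N p v v' r.

Lemma is_derive_ef_G r : 0 < r < 1 ->
  is_derive (ef_G c N p v v') r (ef_alpha N p * ef_B p v v' r ^ 2 / r / ef_G c N p v v' r).
Proof.
  intro Hr. pose proof (solution_is_derive_ef_energy N p v v' v'' Hp Hsol r Hr) as HE.
  pose proof (Hkinetic r Hr). pose proof (pow2_ge_0 (ef_B p v v' r)).
  assert (Hsq : 0 < sqrt (2 * (ef_energy N p v v' r + c))) by (apply sqrt_lt_R0; lra).
  unfold ef_G. auto_derive.
  - split; [eexists; exact HE | split; [lra | exact I]].
  - rewrite_derive HE. field. lra.
Qed.

Lemma ef_G_continuity_pt r : 0 < r < 1 -> continuity_pt (ef_G c N p v v') r.
Proof.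
  intro Hr. apply derivable_continuous_pt. eexists. apply is_derive_Reals, is_derive_ef_G, Hr.
Qed.

Lemma ef_G_sub_A_nonincreasing x y sg : 0 < x -> x <= y -> y < 1 -> (sg = 1 \/ sg = -1) ->
  (forall t, x < t < y -> 0 <= sg * ef_B p v v' t) ->
  ef_G c N p v v' y - sg * ef_alpha N p * ef_A p v y <= ef_G c N p v v' x - sg * ef_alpha N p * ef_A p v x.
Proof.
  intros Hx Hxy Hy Hsg HsgB.
  apply (nonincreasing_of_derive_nonpos (fun t => ef_G c N p v v' t - sg * ef_alpha N p * ef_A p v t)
     (fun t => ef_alpha N p * ef_B p v v' t ^ 2 / t / ef_G c N p v v' t - sg * ef_alpha N p * (ef_B p v v' t / t)));
    [exact Hxy| |].
  - intros t Ht. apply is_derive_Reals. destruct (Hsol t ltac:(lra)) as [Hd _].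
    apply (is_derive_minus (ef_G c N p v v')); [apply is_derive_ef_G; lra|].
    apply (is_derive_scal (ef_A p v)), is_derive_ef_A; [lra | exact Hd].
  - intros t Ht. specialize (HsgB t Ht). pose proof (Hkinetic t ltac:(lra)) as Hk.
    set (B := ef_B p v v' t) in *. set (G := ef_G c N p v v' t).
    assert (HG2 : G * G = 2 * (ef_energy N p v v' t + c)) by (apply sqrt_sqrt; nra).
    assert (HG : 0 < G) by (apply sqrt_lt_R0; nra).
    (* |B| <= G and sg B >= 0 give B^2 <= sg B G *)
    assert (HBG : B * B <= sg * B * G) by (destruct Hsg; subst sg; nra).
    replace (ef_alpha N p * B ^ 2 / t / G - sg * ef_alpha N p * (B / t))
      with (ef_alpha N p / (t * G) * (B * B - sg * B * G)) by (field; lra).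
    assert (0 <= ef_alpha N p / (t * G)) by (apply Rdiv_le_0_compat; nra).
    nra.
Qed.

Lemma ef_B_nonpos_persists u y : 0 < u -> y < 1 -> (forall t, u <= t <= y -> 0 < ef_A p v t) ->
  ef_B p v v' u <= 0 -> forall t, u <= t <= y -> ef_B p v v' t <= 0.
Proof.
  intros Hu Hy HA.
  apply (nonpos_persists _ (fun t => (ef_alpha N p * ef_B p v v' t + ef_b N p * ef_A p v t
                                       - ef_K p v t * ef_A p v t) / t)).
  - intros t Ht. destruct (Hsol t ltac:(lra)) as [Hd [Hd' Hode]].
    apply is_derive_Reals, (is_derive_ef_B N p v v' v''); auto; lra.
  - intros t Ht HB. specialize (HA t Ht).
    assert (Hv : v t <> 0) by (intro Hv; unfold ef_A in HA; rewrite Hv, Rmult_0_r in HA; lra).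
    pose proof (ef_b_lt_K N p v v' t Hp ltac:(lra) Hv HB (Hnonneg t ltac:(lra))).
    rewrite HB. replace ((ef_alpha N p * 0 + ef_b N p * ef_A p v t - ef_K p v t * ef_A p v t) / t)
      with (ef_A p v t * (ef_b N p - ef_K p v t) / t) by (field; lra).
    apply Rdiv_neg_pos; [nra | lra].
Qed.

(* On an interval where A > 0, B changes sign at most once, from + to -: A rises then falls. *)
Lemma ef_G_growth_pos x y L : 0 < x -> x <= y -> y < 1 ->
  (forall t, x <= t <= y -> 0 < ef_A p v t) -> (forall t, x <= t <= y -> ef_A p v t <= L) ->
  ef_G c N p v v' y <= ef_G c N p v v' x + 2 * ef_alpha N p * L.
Proof.
  intros Hx Hxy Hy HA HL.
  destruct (sign_change_once (ef_B p v v') x y Hxy) as [q [Hq [Hup Hdown]]].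
  { intros u Hu HBu. apply ef_B_nonpos_persists; [lra | exact Hy | | lra].
    intros t Ht. apply HA. lra. }
  pose proof (ef_G_sub_A_nonincreasing x q 1 Hx (proj1 Hq) ltac:(lra) (or_introl eq_refl)) as Hrise.
  pose proof (ef_G_sub_A_nonincreasing q y (-1) ltac:(lra) (proj2 Hq) Hy (or_intror eq_refl)) as Hfall.
  assert (HAx : 0 < ef_A p v x) by (apply HA; lra).
  assert (HAy : 0 < ef_A p v y) by (apply HA; lra).
  assert (HLq : ef_A p v q <= L) by (apply HL; lra).
  assert (ef_G c N p v v' q - 1 * ef_alpha N p * ef_A p v q <= ef_G c N p v v' x - 1 * ef_alpha N p * ef_A p v x)
    by (apply Hrise; intros t Ht; rewrite Rmult_1_l; apply Hup; lra).
  assert (ef_G c N p v v' y - -1 * ef_alpha N p * ef_A p v y <= ef_G c N p v v' q - -1 * ef_alpha N p * ef_A p v q)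
    by (apply Hfall; intros t Ht; specialize (Hdown t Ht); lra).
  nra.
Qed.

End Growth.

Lemma ode_solution_opp N p v v' v'' : ode_solution N p v v' v'' ->
  ode_solution N p (fun r => - v r) (fun r => - v' r) (fun r => - v'' r).
Proof.
  intros Hsol r Hr. destruct (Hsol r Hr) as [Hd [Hd' Hode]].
  split; [now apply (is_derive_opp v) | split; [now apply (is_derive_opp v') |]].
  rewrite Rabs_Ropp. lra.
Qed.

Lemma ef_A_opp p v r : ef_A p (fun r => - v r) r = - ef_A p v r.
Proof. unfold ef_A. ring. Qed.

Lemma ef_B_opp p v v' r : ef_B p (fun r => - v r) (fun r => - v' r) r = - ef_B p v v' r.
Proof. unfold ef_B. ring. Qed.

Lemma ef_energy_opp N p v v' r :
  ef_energy N p (fun r => - v r) (fun r => - v' r) r = ef_energy N p v v' r.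
Proof. unfold ef_energy, ef_K. rewrite ef_A_opp, ef_B_opp. cbv beta. rewrite Rabs_Ropp. unfold Rdiv. ring. Qed.

Lemma ef_G_opp c N p v v' r : ef_G c N p (fun r => - v r) (fun r => - v' r) r = ef_G c N p v v' r.
Proof. unfold ef_G. rewrite ef_energy_opp. reflexivity. Qed.

Lemma ef_G_growth N p c v v' v'' x y L : 1 < p -> ode_solution N p v v' v'' -> 0 <= ef_alpha N p ->
  (forall r, 0 < r < 1 -> ef_B p v v' r ^ 2 < 2 * (ef_energy N p v v' r + c)) ->
  (forall r, 0 < r < 1 -> 0 <= ef_energy N p v v' r) ->
  0 < x -> x <= y -> y < 1 -> (forall t, x <= t <= y -> v t <> 0) ->
  (forall t, x <= t <= y -> Rabs (ef_A p v t) <= L) ->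
  ef_G c N p v v' y <= ef_G c N p v v' x + 2 * ef_alpha N p * L.
Proof.
  intros Hp Hsol Ha Hkin Hnonneg Hx Hxy Hy Hnz HL.
  assert (Hcont : forall t, x <= t <= y -> continuity_pt v t)
    by (intros t Ht; apply (solution_continuity_pt N p v v' v''); auto; lra).
  assert (Hpos : forall w : R -> R, (forall t, x <= t <= y -> continuity_pt w t) ->
            (forall t, x <= t <= y -> w t <> 0) -> 0 < w x -> forall t, x <= t <= y -> 0 < ef_A p w t)
    by (intros w Hc Hw Hwx t Ht; apply Rmult_lt_0_compat;
        [apply exp_pos | apply (continuity_sign_preserved w x y); auto]).
  destruct (Rlt_or_le 0 (v x)) as [Hvx|Hvx].
  - apply (ef_G_growth_pos N p c v v' v''); auto.
    intros t Ht. eapply Rle_trans; [apply Rle_abs | apply HL, Ht].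
  - assert (v x <> 0) by (apply Hnz; lra).
    rewrite <- (ef_G_opp c N p v v' x), <- (ef_G_opp c N p v v' y).
    apply (ef_G_growth_pos N p c _ _ (fun r => - v'' r)); auto.
    + now apply ode_solution_opp.
    + intros r Hr. rewrite ef_B_opp, ef_energy_opp, <- Rsqr_pow2, <- Rsqr_neg, Rsqr_pow2. auto.
    + intros r Hr. rewrite ef_energy_opp. auto.
    + apply Hpos; [intros t Ht; apply continuity_pt_opp, Hcont, Ht | intros t Ht; specialize (Hnz t Ht); lra | lra].
    + intros t Ht. rewrite ef_A_opp. eapply Rle_trans; [|apply HL, Ht].
      rewrite <- Rabs_Ropp. apply Rle_abs.
Qed.

Lemma increasing_lt (rad : nat -> R) m : (forall i, (i < m)%nat -> rad i < rad (S i)) ->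
  forall i j, (i < j <= m)%nat -> rad i < rad j.
Proof.
  intros Hinc i j. induction j as [|j IH]; intro Hij; [lia|].
  destruct (Nat.eq_dec i j) as [->|Hne]; [apply Hinc; lia|].
  apply (Rlt_trans _ (rad j)); [apply IH; lia | apply Hinc; lia].
Qed.

Lemma increasing_le (rad : nat -> R) m : (forall i, (i < m)%nat -> rad i < rad (S i)) ->
  forall i j, (i <= j <= m)%nat -> rad i <= rad j.
Proof.
  intros Hinc i j Hij. destruct (Nat.eq_dec i j) as [->|Hne]; [lra|].
  left. apply (increasing_lt rad m); [exact Hinc | lia].
Qed.

Lemma interval_of_partition (rad : nat -> R) r : rad 0%nat = 0 -> 0 < r ->
  forall k, r <= rad k -> exists j, (j < k)%nat /\ rad j < r <= rad (S j).
Proof.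
  intros H0 Hr. induction k as [|k IH]; intro Hk; [lra|].
  destruct (Rle_or_lt r (rad k)) as [Hle|Hlt].
  - destruct (IH Hle) as [j [Hj Hrj]]. exists j. split; [lia | exact Hrj].
  - exists k. split; [lia | lra].
Qed.

Section Nodal.
Variables (N : nat) (p c : R) (v v' v'' : R -> R) (rad : nat -> R) (m : nat).
Hypothesis Hp : 1 < p.
Hypothesis Hsol : ode_solution N p v v' v''.
Hypothesis Halpha : 0 <= ef_alpha N p.
Hypothesis Hkinetic : forall r, 0 < r < 1 -> ef_B p v v' r ^ 2 < 2 * (ef_energy N p v v' r + c).
Hypothesis Hv0 : continuity_pt v 0.
Hypothesis Hv'0 : continuity_pt v' 0.
Hypothesis Hrad0 : rad 0%nat = 0.
Hypothesis Hradm : rad m = 1.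
Hypothesis Hinc : forall i, (i < m)%nat -> rad i < rad (S i).
Hypothesis Hzeros : forall t, 0 <= t < 1 ->
  (v t = 0 <-> exists i, (1 <= i)%nat /\ (i < m)%nat /\ t = rad i).

Lemma nodal_nonzero k t : (k < m)%nat -> rad k < t < rad (S k) -> v t <> 0.
Proof.
  intros Hk Ht Hv.
  assert (0 <= rad k) by (rewrite <- Hrad0; apply (increasing_le rad m); [exact Hinc | lia]).
  assert (rad (S k) <= 1) by (rewrite <- Hradm; apply (increasing_le rad m); [exact Hinc | lia]).
  destruct (proj1 (Hzeros t ltac:(lra)) Hv) as [j [_ [Hj ->]]].
  destruct (Nat.le_gt_cases j k).
  - assert (rad j <= rad k) by (apply (increasing_le rad m); [exact Hinc | lia]). lra.
  - assert (rad (S k) <= rad j) by (apply (increasing_le rad m); [exact Hinc | lia]). lra.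
Qed.

Variables (r L : R).
Hypothesis Hr : 0 < r < 1.
Hypothesis HL0 : 0 <= L.
Hypothesis HL : forall s, 0 < s <= r -> Rabs (ef_A p v s) <= L.

Lemma ef_G_growth_nodal k x s : (k < m)%nat -> rad k < x -> 0 < x -> x <= s -> s < rad (S k) -> s <= r ->
  ef_G c N p v v' s <= ef_G c N p v v' x + 2 * ef_alpha N p * L.
Proof.
  intros Hk Hx Hx0 Hxs Hs Hsr.
  apply (ef_G_growth N p c v v' v''); auto; try lra.
  - intros t Ht. apply (ef_energy_nonneg N p v v' v''); auto.
  - intros t Ht. apply (nodal_nonzero k); [exact Hk | lra].
  - intros t Ht. apply HL. lra.
Qed.

Lemma ef_G_bound_closed i B : (i < m)%nat ->
  (forall s, rad i < s < rad (S i) -> s <= r -> ef_G c N p v v' s <= B) ->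
  forall s, rad i < s <= rad (S i) -> s <= r -> ef_G c N p v v' s <= B.
Proof.
  intros Hi Hopen s Hs Hsr. destruct (Rle_lt_or_eq_dec _ _ (proj2 Hs)) as [Hlt|Heq]; [apply Hopen; lra|].
  assert (0 <= rad i) by (rewrite <- Hrad0; apply (increasing_le rad m); [exact Hinc | lia]).
  apply (continuity_pt_le_left _ (rad i)); [lra | apply (ef_G_continuity_pt N p c v v' v''); auto; lra|].
  intros w Hw. apply Hopen; lra.
Qed.

Lemma ef_G_bound_first (Hm : (0 < m)%nat) s : 0 < s < rad 1 -> s <= r ->
  ef_G c N p v v' s <= sqrt (2 * (1 + c)) + 2 * ef_alpha N p * L.
Proof.
  intros Hs Hsr.
  destruct (ef_energy_near_0 N p v v' Hp Hv0 Hv'0 1 Rlt_0_1) as [d [Hd Hnear]].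
  set (x := Rmin (d / 2) s).
  assert (Hx : 0 < x /\ x < d /\ x <= s)
    by (pose proof (Rmin_l (d / 2) s); pose proof (Rmin_r (d / 2) s);
        unfold x; repeat split; try lra; apply Rmin_glb_lt; lra).
  assert (ef_G c N p v v' x <= sqrt (2 * (1 + c))).
  { apply sqrt_le_1_alt. specialize (Hnear x ltac:(lra)). pose proof (Rle_abs (ef_energy N p v v' x)). lra. }
  pose proof (ef_G_growth_nodal 0 x s Hm ltac:(rewrite Hrad0; lra) ltac:(lra) ltac:(lra) ltac:(lra) Hsr).
  lra.
Qed.

Lemma ef_G_bound_next k B s : (S k < m)%nat -> rad (S k) < s < rad (S (S k)) -> s <= r ->
  ef_G c N p v v' (rad (S k)) <= B -> ef_G c N p v v' s <= B + 2 * ef_alpha N p * L.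
Proof.
  intros Hk Hs Hsr HB.
  assert (0 < rad (S k)) by (rewrite <- Hrad0; apply (increasing_lt rad m); [exact Hinc | lia]).
  cut (ef_G c N p v v' s - 2 * ef_alpha N p * L <= ef_G c N p v v' (rad (S k))); [lra|].
  apply (continuity_pt_ge_right _ _ s); [lra | apply (ef_G_continuity_pt N p c v v' v''); auto; lra|].
  intros x Hx. pose proof (ef_G_growth_nodal (S k) x s Hk ltac:(lra) ltac:(lra) ltac:(lra) ltac:(lra) Hsr).
  lra.
Qed.

Lemma ef_G_bound_on_nodal_interval k : (k < m)%nat -> forall s, rad k < s <= rad (S k) -> s <= r ->
  ef_G c N p v v' s <= sqrt (2 * (1 + c)) + 2 * INR (S k) * ef_alpha N p * L.
Proof.
  induction k as [|k IH]; intro Hk; apply ef_G_bound_closed; auto; intros s Hs Hsr.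
  - rewrite Hrad0 in Hs. simpl INR. rewrite Rmult_1_r. apply ef_G_bound_first; auto.
  - assert (rad k < rad (S k)) by (apply Hinc; lia).
    rewrite (S_INR (S k)).
    replace (sqrt (2 * (1 + c)) + 2 * (INR (S k) + 1) * ef_alpha N p * L)
      with (sqrt (2 * (1 + c)) + 2 * INR (S k) * ef_alpha N p * L + 2 * ef_alpha N p * L) by ring.
    apply (ef_G_bound_next k); auto.
    apply IH; [lia | lra | lra].
Qed.

Lemma ef_G_nodal_bound : ef_G c N p v v' r <= sqrt (2 * (1 + c)) + 2 * INR m * ef_alpha N p * L.
Proof.
  destruct (interval_of_partition rad r Hrad0 (proj1 Hr) m ltac:(lra)) as [j [Hj Hrj]].
  eapply Rle_trans; [apply (ef_G_bound_on_nodal_interval j); auto; lra|].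
  assert (INR (S j) <= INR m) by (apply le_INR; lia).
  assert (0 <= ef_alpha N p * L) by (apply Rmult_le_pos; auto). nra.
Qed.

End Nodal.

(** * Bounds near the critical exponent *)

Section Amplitude.
Variables (N : nat) (p b1 beta1 Y : R) (v v' : R -> R).
Hypothesis Hp : 1 < p.
Hypothesis Hbeta : ef_beta p <= beta1.
Hypothesis Hb : ef_b N p <= b1.
Hypothesis Hb1 : 0 <= b1.
Hypothesis HY : 1 <= Y.
Hypothesis HYb : (p + 1) * b1 <= Y.

Lemma ef_A_sq_le_of_K_le r : 0 < r -> v r <> 0 -> ef_K p v r <= Y -> ef_A p v r ^ 2 <= Rpower Y beta1.
Proof.
  intros Hr Hv HK. rewrite ef_A_sq by assumption.
  pose proof (ef_beta_pos p Hp).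
  apply (Rle_trans _ (Rpower Y (ef_beta p))).
  - apply Rle_Rpower_l; [lra | split; [apply ef_K_pos | ]; assumption].
  - apply Rle_Rpower; assumption.
Qed.

Lemma ef_energy_ge_of_K_ge r : 0 < r -> v r <> 0 -> Y <= ef_K p v r ->
  ef_A p v r ^ 2 <= 2 * (p + 1) * ef_energy N p v v' r /\ ef_K p v r <= 2 * (p + 1) * ef_energy N p v v' r.
Proof.
  intros Hr Hv HK.
  assert (HA1 : 1 <= ef_A p v r ^ 2).
  { rewrite ef_A_sq by assumption. rewrite <- (Rpower_O (ef_K p v r)) by (apply ef_K_pos; assumption).
    apply Rle_Rpower; [lra | left; apply ef_beta_pos, Hp]. }
  assert (Hpb : (p + 1) * ef_b N p <= ef_K p v r) by (apply (Rle_trans _ ((p + 1) * b1)); [apply Rmult_le_compat_l|]; lra).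
  assert (HE : ef_A p v r ^ 2 * ef_K p v r <= 2 * (p + 1) * ef_energy N p v v' r).
  { unfold ef_energy. pose proof (pow2_ge_0 (ef_B p v v' r)).
    replace (2 * (p + 1) * (ef_B p v v' r ^ 2 / 2 - ef_b N p * ef_A p v r ^ 2 / 2
               + ef_A p v r ^ 2 * ef_K p v r / (p + 1)))
      with ((p + 1) * ef_B p v v' r ^ 2 + ef_A p v r ^ 2 * (2 * ef_K p v r - (p + 1) * ef_b N p))
      by (field; lra).
    nra. }
  split; nra.
Qed.

Lemma ef_potential_le r : 0 < r ->
  ef_b N p * ef_A p v r ^ 2 / 2 - ef_A p v r ^ 2 * ef_K p v r / (p + 1) <= b1 * Rpower Y beta1.
Proof.
  intro Hr. pose proof (exp_pos (beta1 * ln Y)) as HZ. change (exp (beta1 * ln Y)) with (Rpower Y beta1) in HZ.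
  assert (HbZ : 0 <= b1 * Rpower Y beta1) by nra.
  pose proof (pow2_ge_0 (ef_A p v r)) as HA0. pose proof (ef_K_ge0 p v r) as HK0.
  assert (HKp : 0 <= ef_A p v r ^ 2 * ef_K p v r / (p + 1))
    by (apply Rmult_le_pos; [nra | left; apply Rinv_0_lt_compat; lra]).
  destruct (Req_dec (v r) 0) as [Hv|Hv].
  { unfold ef_A. rewrite Hv. replace ((Rpower r (ef_beta p) * 0) ^ 2) with 0 by ring.
    unfold Rdiv. rewrite !Rmult_0_l, !Rmult_0_r. lra. }
  destruct (Rle_or_lt (ef_K p v r) Y) as [HK|HK].
  - pose proof (ef_A_sq_le_of_K_le r Hr Hv HK).
    destruct (Rle_or_lt (ef_b N p) 0); nra.
  - assert (b1 <= ef_K p v r / (p + 1))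
      by (apply (Rmult_le_reg_l (p + 1)); [lra|]; field_simplify; lra).
    assert (ef_A p v r ^ 2 * ef_K p v r / (p + 1) = ef_A p v r ^ 2 * (ef_K p v r / (p + 1)))
      by (field; lra).
    destruct (Rle_or_lt (ef_b N p) 0); nra.
Qed.

End Amplitude.

Lemma sqrt_plus_le a b : 0 <= a -> 0 <= b -> sqrt (a + b) <= sqrt a + sqrt b.
Proof.
  intros Ha Hb. pose proof (sqrt_pos a). pose proof (sqrt_pos b).
  rewrite <- (sqrt_square (sqrt a + sqrt b)) by lra. apply sqrt_le_1_alt.
  pose proof (sqrt_sqrt a Ha). pose proof (sqrt_sqrt b Hb). nra.
Qed.

Section EnergyBound.
Variables (N : nat) (p b1 beta1 Y : R) (v v' v'' : R -> R) (rad : nat -> R) (m : nat).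
Hypothesis Hp : 1 < p.
Hypothesis Hbeta : ef_beta p <= beta1.
Hypothesis Hb : ef_b N p <= b1.
Hypothesis Hb1 : 0 <= b1.
Hypothesis HY : 1 <= Y.
Hypothesis HYb : (p + 1) * b1 <= Y.
Hypothesis Hsol : ode_solution N p v v' v''.
Hypothesis Halpha : 0 <= ef_alpha N p.
Hypothesis Hv0 : continuity_pt v 0.
Hypothesis Hv'0 : continuity_pt v' 0.
Hypothesis Hrad0 : rad 0%nat = 0.
Hypothesis Hradm : rad m = 1.
Hypothesis Hinc : forall i, (i < m)%nat -> rad i < rad (S i).
Hypothesis Hzeros : forall t, 0 <= t < 1 ->
  (v t = 0 <-> exists i, (1 <= i)%nat /\ (i < m)%nat /\ t = rad i).

Lemma ef_kinetic_bound r : 0 < r ->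
  ef_B p v v' r ^ 2 < 2 * (ef_energy N p v v' r + (1 + b1 * Rpower Y beta1)).
Proof.
  intro Hr. pose proof (ef_potential_le N p b1 beta1 Y v Hp Hbeta Hb Hb1 HY HYb r Hr).
  unfold ef_energy. lra.
Qed.

Lemma ef_A_sq_le_energy s r : 0 < s <= r -> r < 1 ->
  ef_A p v s ^ 2 <= Rpower Y beta1 + 2 * (p + 1) * ef_energy N p v v' r.
Proof.
  intros Hs Hr.
  assert (HEs : 0 <= ef_energy N p v v' s) by (apply (ef_energy_nonneg N p v v' v''); auto; lra).
  assert (Hmono : ef_energy N p v v' s <= ef_energy N p v v' r)
    by (apply (ef_energy_nondecreasing N p v v' v''); auto; lra).
  pose proof (exp_pos (beta1 * ln Y)). change (exp (beta1 * ln Y)) with (Rpower Y beta1) in *.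
  destruct (Req_dec (v s) 0) as [Hv|Hv].
  { unfold ef_A. rewrite Hv. replace ((Rpower s (ef_beta p) * 0) ^ 2) with 0 by ring. nra. }
  destruct (Rle_or_lt (ef_K p v s) Y) as [HK|HK].
  - pose proof (ef_A_sq_le_of_K_le p beta1 Y v Hp Hbeta HY s (proj1 Hs) Hv HK). nra.
  - destruct (ef_energy_ge_of_K_ge N p b1 Y v v' Hp Hb HY HYb s (proj1 Hs) Hv (Rlt_le _ _ HK)). nra.
Qed.

Lemma ef_K_le_energy r : 0 < r < 1 -> ef_K p v r <= Rmax Y (2 * (p + 1) * ef_energy N p v v' r).
Proof.
  intro Hr. destruct (Req_dec (v r) 0) as [Hv|Hv].
  { unfold ef_K. rewrite Hv, Rabs_R0, rpow_0, Rmult_0_r. eapply Rle_trans; [|apply Rmax_l]. lra. }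
  destruct (Rle_or_lt (ef_K p v r) Y) as [HK|HK]; [eapply Rle_trans; [exact HK | apply Rmax_l]|].
  eapply Rle_trans; [|apply Rmax_r].
  apply (ef_energy_ge_of_K_ge N p b1 Y v v' Hp Hb HY HYb r (proj1 Hr) Hv (Rlt_le _ _ HK)).
Qed.

Lemma ef_energy_bounded r : 2 * INR m * ef_alpha N p * (sqrt (p + 1) + 1) <= / 2 -> 0 < r < 1 ->
  ef_energy N p v v' r <= 2 * (sqrt (2 * (1 + (1 + b1 * Rpower Y beta1))) + sqrt (Rpower Y beta1)) ^ 2.
Proof.
  intros Hsmall Hr.
  set (Z := Rpower Y beta1) in *. set (c := 1 + b1 * Z) in *. set (E := ef_energy N p v v' r).
  assert (HE : 0 <= E) by (apply (ef_energy_nonneg N p v v' v''); auto).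
  assert (HZ : 0 <= Z) by (left; apply exp_pos).
  set (Lam := sqrt (Z + 2 * (p + 1) * E)).
  assert (HLam : forall s, 0 < s <= r -> Rabs (ef_A p v s) <= Lam).
  { intros s Hs. rewrite <- sqrt_Rsqr_abs, Rsqr_pow2. apply sqrt_le_1_alt.
    apply ef_A_sq_le_energy; lra. }
  pose proof (ef_G_nodal_bound N p c v v' v'' rad m Hp Hsol Halpha (fun r Hr => ef_kinetic_bound r (proj1 Hr)) Hv0 Hv'0
                Hrad0 Hradm Hinc Hzeros r Lam Hr (sqrt_pos _) HLam) as HG.
  set (X := sqrt (2 * E)). set (g0 := sqrt (2 * (1 + c))) in *.
  assert (Hc : 1 <= c) by (unfold c; nra).
  assert (HXG : X <= ef_G c N p v v' r) by (apply sqrt_le_1_alt; unfold E; lra).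
  assert (HLX : Lam <= sqrt Z + sqrt (p + 1) * X).
  { unfold X. rewrite <- sqrt_mult by lra. eapply Rle_trans; [|apply sqrt_plus_le; nra].
    right. unfold Lam. f_equal. ring. }
  set (k := 2 * INR m * ef_alpha N p) in *.
  assert (Hk : 0 <= k) by (unfold k; pose proof (pos_INR m); nra).
  pose proof (sqrt_pos Z). pose proof (sqrt_pos (p + 1)). pose proof (sqrt_pos (2 * (1 + c))).
  assert (0 <= X) by apply sqrt_pos.
  assert (k * Lam <= k * sqrt Z + k * sqrt (p + 1) * X) by nra.
  assert (k * sqrt Z <= sqrt Z / 2) by nra.
  assert (k * sqrt (p + 1) * X <= X / 2) by nra.
  assert (HX : X <= 2 * g0 + sqrt Z) by lra.
  assert (HX2 : X * X = 2 * E) by (apply sqrt_sqrt; lra).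
  nra.
Qed.

End EnergyBound.

Lemma radial_solution_ode N p v : radial_solution N p v ->
  exists v' v'', ode_solution N p v v' v'' /\ continuity_pt v 0 /\ continuity_pt v' 0.
Proof.
  intros [v' [v'' [Hd [_ [Hode _]]]]]. exists v', v''.
  split; [|split; apply derivable_continuous_pt].
  - intros r Hr. destruct (Hd r ltac:(lra)) as [H1 H2].
    split; [|split]; [apply is_derive_Reals, H1 | apply is_derive_Reals, H2 | apply Hode, Hr].
  - exists (v' 0). apply (Hd 0). lra.
  - exists (v'' 0). apply (Hd 0). lra.
Qed.

Definition b_max (N : nat) : R := (INR N - 1) * (INR N - 2) / 2.
Definition K_threshold (N : nat) : R := 1 + (pS N + 1) * b_max N.
Definition A_sq_max (N : nat) : R := Rpower (K_threshold N) ((INR N - 1) / 2).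
Definition energy_max (N : nat) : R :=
  2 * (sqrt (2 * (1 + (1 + b_max N * A_sq_max N))) + sqrt (A_sq_max N)) ^ 2.
Definition weight_bound (N : nat) : R := Rmax (K_threshold N) (2 * (pS N + 1) * energy_max N).
Definition exponent_gap (N : nat) (eps : R) : R := pS N - 1 - 4 / (INR N - 2 + eps).

Lemma pS_minus_1 N : (3 <= N)%nat -> pS N - 1 = 4 / (INR N - 2).
Proof. intro HN. apply le_INR in HN. simpl in HN. unfold pS. field. lra. Qed.

Lemma weight_bound_pos N : (3 <= N)%nat -> 0 < weight_bound N.
Proof.
  intro HN. pose proof (pS_minus_1 N HN) as HpS. apply le_INR in HN. simpl in HN.
  assert (0 < 4 / (INR N - 2)) by (apply Rdiv_lt_0_compat; lra).
  assert (0 <= b_max N) by (unfold b_max; nra).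
  apply (Rlt_le_trans _ (K_threshold N)); [|apply Rmax_l].
  unfold K_threshold. nra.
Qed.

Lemma exponent_gap_pos N eps : (3 <= N)%nat -> 0 < eps -> 0 < exponent_gap N eps.
Proof.
  intros HN He. unfold exponent_gap. rewrite pS_minus_1 by exact HN. apply le_INR in HN. simpl in HN.
  apply Rlt_0_minus, Rmult_lt_compat_l, Rinv_lt_contravar; nra.
Qed.

Lemma ef_exponents_near_critical N p eps : (3 <= N)%nat -> 0 < eps <= 1 ->
  pS N - exponent_gap N eps < p < pS N ->
  1 < p /\ 0 <= ef_alpha N p <= eps /\ ef_beta p <= (INR N - 1) / 2 /\ ef_b N p <= b_max N.
Proof.
  intros HN He Hpr. pose proof (pS_minus_1 N HN) as HpS. unfold exponent_gap in Hpr.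
  apply le_INR in HN. simpl in HN.
  assert (H4 : 0 < 4 / (INR N - 2 + eps) /\ 0 < 4 / (INR N - 2))
    by (split; apply Rdiv_lt_0_compat; lra).
  assert (Hlow : (INR N - 2) / 2 < ef_beta p).
  { unfold ef_beta. replace ((INR N - 2) / 2) with (2 / (4 / (INR N - 2))) by (field; lra).
    apply Rmult_lt_compat_l; [lra|]. apply Rinv_lt_contravar; nra. }
  assert (Hup : ef_beta p < (INR N - 2 + eps) / 2).
  { unfold ef_beta. replace ((INR N - 2 + eps) / 2) with (2 / (4 / (INR N - 2 + eps))) by (field; lra).
    apply Rmult_lt_compat_l; [lra|]. apply Rinv_lt_contravar; nra. }
  unfold ef_alpha, ef_b, b_max. repeat split; try lra. nra.
Qed.

Lemma ef_K_le_weight_bound N p m v r : (3 <= N)%nat -> 1 < p < pS N ->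
  0 <= ef_alpha N p -> ef_beta p <= (INR N - 1) / 2 -> ef_b N p <= b_max N ->
  2 * INR m * ef_alpha N p * (sqrt (pS N + 1) + 1) <= / 2 ->
  radial_solution N p v -> has_nodal_regions m v -> 0 < r < 1 ->
  ef_K p v r <= weight_bound N.
Proof.
  intros HN [Hp HppS] Halpha Hbeta Hb Hsmall Hrad [rad [Hr0 [Hrm [Hinc Hz]]]] Hr.
  destruct (radial_solution_ode N p v Hrad) as [v' [v'' [Hsol [Hv0 Hv'0]]]].
  assert (Hb0 : 0 <= b_max N) by (unfold b_max; apply le_INR in HN; simpl in HN; nra).
  assert (HY : 1 <= K_threshold N /\ (p + 1) * b_max N <= K_threshold N)
    by (unfold K_threshold; split; nra).
  eapply Rle_trans; [apply (ef_K_le_energy N p (b_max N) (K_threshold N) v v'); tauto|].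
  apply Rle_max_compat_l.
  assert (HE0 : 0 <= ef_energy N p v v' r) by (apply (ef_energy_nonneg N p v v' v''); auto).
  assert (HE : ef_energy N p v v' r <= energy_max N).
  { apply (ef_energy_bounded N p (b_max N) ((INR N - 1) / 2) (K_threshold N) v v' v'' rad m); try tauto.
    assert (sqrt (p + 1) <= sqrt (pS N + 1)) by (apply sqrt_le_1_alt; lra).
    pose proof (sqrt_pos (p + 1)). pose proof (pos_INR m). nra. }
  nra.
Qed.

Theorem proposition3p15 :
  forall N : nat, (3 <= N)%nat ->
  exists C : R, C > 0 /\
  forall m : nat, (1 <= m)%nat ->
  exists delta : R, delta > 0 /\
  forall p : R, pS N - delta < p < pS N ->
  forall v : R -> R, nodal_radial_solution N p m v ->
  forall r : R, 0 <= r < 1 ->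
    r ^ 2 * rpow (Rabs (v r)) (p - 1) <= C.
Proof.
  intros N HN. exists (weight_bound N). split; [apply Rlt_gt, weight_bound_pos, HN|].
  intros m Hm. apply le_INR in Hm. simpl in Hm.
  set (eps := / (4 * INR m * (sqrt (pS N + 1) + 1))).
  pose proof (sqrt_pos (pS N + 1)).
  assert (He : 0 < eps <= 1) by (split; [apply Rinv_0_lt_compat; nra | rewrite <- Rinv_1; apply Rinv_le_contravar; nra]).
  exists (exponent_gap N eps). split; [apply Rlt_gt, exponent_gap_pos; [exact HN | lra]|].
  intros p Hpr v [Hrad [Hnod _]] r Hr.
  destruct (ef_exponents_near_critical N p eps HN He Hpr) as [Hp [[Halpha Halpha_eps] [Hbeta Hb]]].
  destruct (Req_dec r 0) as [Hr0|Hr0].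
  - subst r. rewrite pow_i, Rmult_0_l by lia. left. apply weight_bound_pos, HN.
  - apply (ef_K_le_weight_bound N p m v r); auto; [lra | | lra].
    assert (2 * INR m * eps * (sqrt (pS N + 1) + 1) = / 2) by (unfold eps; field; nra).
    assert (ef_alpha N p * (sqrt (pS N + 1) + 1) <= eps * (sqrt (pS N + 1) + 1))
      by (apply Rmult_le_compat_r; lra).
    nra.
Qed.
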